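(* Let $n\ge 6$ and $k$ be integers with $3\le k\le n-3$. Then for every integer $m\ge 2$, \[ \mathsf{BO}(k,\mathbb{Z}/n\mathbb{Z})\ge \frac{1}{m}\left(\frac{(n/k)^{1/m}-k}{k-1}\right)^{m-2}. \]
   Context: For a positive integer $k$, a set $\{g_1,\dots,g_k\}$ of $k$ distinct elements of a finite abelian group $G$ (written additively) is called $k$-barycentric if $\sum_{i=1}^k g_i = k\,g_j$ for some $1\le j\le k$. The $k$-th barycentric Olson constant $\mathsf{BO}(k,G)$ is the smallest integer $\ell$ such that every subset $A\subseteq G$ with $|A|\ge \ell$ contains a $k$-barycentric subset (so that always $\mathsf{BO}(k,G)\le |G|+1$). *)

From HB Require Import structures.
From mathcomp Require Import all_boot all_order all_algebra.

Set Implicit Arguments.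
Unset Strict Implicit.
Unset Printing Implicit Defensive.

Import GRing.Theory.

Definition k_barycentric (G : finZmodType) (k : nat) (S : {set G}) : bool :=
  (#|S| == k) && [exists j in S, ((\sum_(g in S) g) == j *+ k)%R].

Definition BO_prop (G : finZmodType) (k : nat) : pred nat :=
  fun l => [forall A : {set G}, (l <= #|A|) ==>
             [exists S : {set G}, (S \subset A) && k_barycentric k S]].

Lemma BO_prop_ex (G : finZmodType) (k : nat) : exists l, BO_prop G k l.
Proof.
exists #|G|.+1; apply/forallP => A; apply/implyP => H.
by move: (max_card A); rewrite leqNgt H.
Qed.

Definition BO (k : nat) (G : finZmodType) : nat := ex_minn (BO_prop_ex G k).

From HB Require Import structures.
From mathcomp Require Import all_boot all_order all_algebra.
From mathcomp Require Import zify.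

Set Implicit Arguments.
Unset Strict Implicit.
Unset Printing Implicit Defensive.

Import GRing.Theory.

(* Choose B maximal with k * B^m <= n and D = ceil(B / (k - 1)).  Vectors
   v in {0, ..., D-1}^m are encoded in base B as integers below B^m and
   embedded in Z/nZ.  Fix a value s of the squared norm |v|^2 and let A_s be
   the image of the sphere {v : |v|^2 = s}.  If some k elements of A_s had
   a sum equal to k times one of them, w, then
   - no reduction mod n occurs, since k * B^m <= n;
   - no carry occurs in base B, since (k - 1) (D - 1) < B;
   so w is the barycenter of the other k - 1 points of the sphere, which
   forces them all to equal w (strict convexity of the sphere).  Hence every
   A_s has no k-barycentric subset, so BO(k, Z/nZ) > |A_s|, and by pigeonhole
   over the m (D - 1)^2 + 1 possible norms some A_s has at least
   D^m / (m (D-1)^2 + 1) >= D^(m-2) / m elements.  Real arithmetic finally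
   compares D with ((n/k)^(1/m) - k) / (k - 1). *)

Lemma BO_gt (G : finZmodType) (k : nat) (A : {set G}) :
  (forall S : {set G}, S \subset A -> ~~ k_barycentric k S) -> #|A| < BO k G.
Proof.
move=> freeA; rewrite /BO; case: ex_minnP => l /forallP /(_ A) hl _.
rewrite ltnNge; apply/negP => lA; move: hl; rewrite lA /=.
by case/existsP => S /andP [SA]; apply/negP/freeA.
Qed.

Definition base_enc (B m : nat) (f : 'I_m -> nat) : nat := \sum_(i < m) f i * B ^ i.

Lemma base_enc_lt B m (f : 'I_m -> nat) : (forall i, f i < B) -> base_enc B f < B ^ m.
Proof.
rewrite /base_enc; elim: m f => [|m IH] f Hf; first by rewrite big_ord0 expn0.
rewrite big_ord_recr /= expnS.
have lo := IH (fun i => f (widen_ord (leqnSn m) i)) (fun i => Hf _).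
have hi : f ord_max * B ^ m <= (B - 1) * B ^ m by apply: leq_mul => //; have := Hf ord_max; lia.
move: lo hi; rewrite /= mulnBl mul1n; set lo := \sum_(i < m) _.
have : B ^ m <= B * B ^ m by rewrite leq_pmull //; apply: leq_ltn_trans (Hf ord_max).
lia.
Qed.

Lemma base_enc_inj B m (f g : 'I_m -> nat) : (forall i, f i < B) -> (forall i, g i < B) ->
  base_enc B f = base_enc B g -> f =1 g.
Proof.
rewrite /base_enc; elim: m f g => [|m IH] f g Hf Hg; first by move=> _ [].
rewrite !big_ord_recr /=; set lf := \sum_(i < m) _; set lg := \sum_(i < m) _.
have Lf : lf < B ^ m := base_enc_lt (fun i => Hf _).
have Lg : lg < B ^ m := base_enc_lt (fun i => Hg _).
move=> E.
have top : f ord_max = g ord_max.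
  have := congr1 (divn^~ (B ^ m)) E => /=.
  by rewrite ![_ + _ * _]addnC !divnMDl ?divn_small ?addn0 //; apply: leq_ltn_trans Lf.
have low : lf = lg by move: E; rewrite top => /addIn.
move/(IH _ _ (fun i => Hf _) (fun i => Hg _)): low => low.
move=> i; case: (unliftP ord_max i) => [j ->|->] //.
by have := low j; congr (f _ = g _); apply: val_inj; rewrite /= /bump leqNgt ltn_ord.
Qed.

Lemma sqr_dist_nat a b : (a - b) ^ 2 + (b - a) ^ 2 + 2 * (a * b) = a ^ 2 + b ^ 2.
Proof. case: (leqP a b) => h; nia. Qed.

(* Strict convexity of spheres: if a point w of the sphere |x|^2 = s is the
   barycenter of points u j (j in S) of the same sphere, all of them equal w;
   indeed the sum of the |u j - w|^2 is then |S| (s - 2 s + s) = 0. *)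
Lemma sphere_barycenter (I : finType) (m : nat) (u : I -> 'I_m -> nat)
    (w : 'I_m -> nat) (S : {set I}) (s : nat) :
  (forall j, j \in S -> \sum_(i < m) u j i ^ 2 = s) -> \sum_(i < m) w i ^ 2 = s ->
  (forall i, \sum_(j in S) u j i = #|S| * w i) ->
  forall j, j \in S -> u j =1 w.
Proof.
move=> onS onw bary.
have cross : \sum_(j in S) \sum_(i < m) 2 * (u j i * w i) = #|S| * (2 * s).
  rewrite exchange_big /= -onw !big_distrr /=; apply: eq_bigr => i _.
  by rewrite -big_distrr -big_distrl /= bary; lia.
have norms : \sum_(j in S) \sum_(i < m) (u j i ^ 2 + w i ^ 2) = #|S| * (2 * s).
  rewrite -sum_nat_const; apply: eq_bigr => j jS.
  by rewrite big_split /= onS // onw addnn mul2n.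
have dist0 : \sum_(j in S) \sum_(i < m) ((u j i - w i) ^ 2 + (w i - u j i) ^ 2) = 0.
  apply/eqP; rewrite -(eqn_add2r (#|S| * (2 * s))) add0n -{1}cross -big_split /=.
  rewrite -norms; apply/eqP/eq_bigr => j _; rewrite -big_split /=.
  by apply: eq_bigr => i _; rewrite sqr_dist_nat.
move=> j jS i; move/eqP: dist0; rewrite sum_nat_eq0 => /forallP /(_ j).
rewrite jS /= sum_nat_eq0 => /forallP /(_ i) /=.
rewrite addn_eq0 !expn_eq0 /= !subn_eq0 => /andP [h1 h2]; lia.
Qed.

Lemma pigeonhole_fiber (T : finType) (M : nat) (f : T -> nat) :
  (forall x, f x <= M) -> exists s, #|T| <= #|[set x | f x == s]| * M.+1.
Proof.
move=> fM; pose g x : 'I_M.+1 := Ordinal (fM x : f x < M.+1).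
pose fiber (s : 'I_M.+1) := [set x | f x == s].
pose s0 := [arg max_(s > (ord0 : 'I_M.+1)) #|fiber s|].
exists (val s0).
have -> : #|T| = \sum_(s : 'I_M.+1) #|fiber s|.
  rewrite -sum1_card (partition_big g predT) //=; apply: eq_bigr => s _.
  by rewrite -sum1_card; apply: eq_bigl => x; rewrite inE -val_eqE.
rewrite -[X in _ <= _ * X](card_ord M.+1) mulnC -sum_nat_const; apply: leq_sum => s _.
rewrite /s0; case: arg_maxnP => // t _; exact.
Qed.

Section LevelSets.

Variables (p k m B D : nat).
Hypothesis k_ge2 : 2 <= k.
Hypothesis carry_free : (k - 1) * (D - 1) < B.
Hypothesis no_wrap : k * B ^ m <= p.+2.

Local Notation vec := {ffun 'I_m -> 'I_D}.

Definition enc (v : vec) : nat := base_enc B (fun i => v i).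
Definition sqnorm (v : vec) : nat := \sum_(i < m) v i ^ 2.
Definition embed (v : vec) : 'Z_p.+2 := (enc v)%:R%R.
Definition level (s : nat) : {set vec} := [set v | sqnorm v == s].

(* The digits of a vector are below B (as D - 1 <= (k - 1) (D - 1) < B). *)
Lemma digit_lt (v : vec) i : v i < B.
Proof. have := ltn_ord (v i); nia. Qed.

Lemma enc_lt (v : vec) : enc v < B ^ m.
Proof. exact: base_enc_lt (digit_lt v). Qed.

Lemma enc_inj : injective enc.
Proof.
move=> v w /(base_enc_inj (digit_lt v) (digit_lt w)) E.
by apply/ffunP => i; apply: val_inj; apply: E.
Qed.

Lemma val_natZp (a : nat) : val (a%:R : 'Z_p.+2)%R = a %% p.+2.
Proof. by rewrite Zp_nat. Qed.

(* The encodings lie below B^m <= p + 2, so the embedding is injective. *)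
Lemma embed_inj : injective embed.
Proof.
move=> v w /(congr1 val); rewrite !val_natZp !modn_small; first exact: enc_inj.
all: by apply: leq_trans (enc_lt _) _; apply: leq_trans no_wrap; rewrite leq_pmull; lia.
Qed.

(* Since k * B^m <= p + 2, a barycentric relation in Z_(p+2) among
   encodings holds already in the integers. *)
Lemma barycentric_no_wrap (T : {set vec}) (w : vec) : #|T| = k ->
  (\sum_(v in T) embed v = embed w *+ k)%R -> \sum_(v in T) enc v = k * enc w.
Proof.
move=> cT; rewrite /embed -natr_sum -mulrnA.
have Bm_gt0 : 0 < B ^ m by apply: leq_ltn_trans (enc_lt w).
have bound x : x < B ^ m -> k * x < p.+2.
  by move=> hx; apply: leq_trans no_wrap; rewrite ltn_pmul2l //; lia.
move/(congr1 val); rewrite [enc w * k]mulnC !val_natZp !modn_small ?bound ?enc_lt //.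
apply: leq_ltn_trans (bound (B ^ m).-1 _); last by rewrite prednK.
rewrite -cT -sum_nat_const; apply: leq_sum => v _; rewrite -ltnS prednK //; exact: enc_lt.
Qed.

(* Since (k - 1) * (D - 1) < B, adding k - 1 encodings produces no carry,
   so an integer barycentric relation holds digit by digit. *)
Lemma barycentric_digits (T : {set vec}) (w : vec) : #|T| = k -> w \in T ->
  \sum_(v in T) enc v = k * enc w ->
  forall i, \sum_(v in T :\ w) (v i : nat) = #|T :\ w| * w i.
Proof.
move=> cT wT; rewrite (big_setD1 w wT) /=.
have cT' : #|T :\ w| = k - 1 by rewrite -cT (cardsD1 w T) wT add1n subn1.
have digit_le (v : vec) i : v i <= D - 1 by have := ltn_ord (v i); lia.
rewrite cT' -[k in k * _](@subnK 1) 1?ltnW // mulnDl mul1n addnC => /addIn E.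
apply: (@base_enc_inj B m (fun i => \sum_(v in T :\ w) (v i : nat)) (fun i => (k - 1) * w i)).
- move=> i; apply: leq_ltn_trans carry_free.
  by rewrite -cT' -sum_nat_const; apply: leq_sum => v _.
- by move=> i; apply: leq_ltn_trans carry_free; rewrite leq_mul2l digit_le orbT.
- transitivity (\sum_(v in T :\ w) enc v).
    by rewrite /enc /base_enc exchange_big; apply: eq_bigr => i _; rewrite big_distrl.
  by rewrite E /enc /base_enc big_distrr /=; apply: eq_bigr => i _; rewrite mulnA.
Qed.

(* The encoded level sets of the squared norm contain no k-barycentric set:
   the distinguished point would be the barycenter of k - 1 other points of
   the same sphere, which forces all of them to coincide with it. *)
Lemma level_free (s : nat) (S : {set 'Z_p.+2}) :
  S \subset embed @: level s -> ~~ k_barycentric k S.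
Proof.
move=> Ssub; apply/negP => /andP [/eqP cS /existsP [j /andP [jS /eqP bary]]].
pose T := level s :&: embed @^-1: S.
have TS : embed @: T = S.
  apply/setP => g; apply/imsetP/idP => [[v] | gS].
    by rewrite !inE => /andP [_ ?] ->.
  case/imsetP: (subsetP Ssub g gS) => v vl Eg.
  by exists v => //; rewrite in_setI vl inE -Eg.
have cT : #|T| = k by rewrite -cS -TS card_imset //; exact: embed_inj.
have [w wT Ejw] : exists2 w, w \in T & j = embed w by apply/imsetP; rewrite TS.
rewrite -TS big_imset /= ?Ejw in bary; last by move=> ? ? _ _; exact: embed_inj.
have digits := barycentric_digits cT wT (barycentric_no_wrap cT bary).
have onT v : v \in T -> sqnorm v = s by rewrite !inE => /andP [/eqP].
have [v vT'] : exists v, v \in T :\ w.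
  apply/set0Pn; rewrite -card_gt0.
  by move: cT; rewrite (cardsD1 w T) wT add1n => cT; rewrite -ltnS cT.
have sphere := @sphere_barycenter _ m (fun (v : vec) i => v i) (fun i => w i) (T :\ w) s
  (fun v vT => onT v (subsetP (subD1set T w) v vT)) (onT w wT) digits.
have v_eq_w := sphere v vT'.
by case/setD1P: vT' => /eqP []; apply/ffunP => i; apply/val_inj/v_eq_w.
Qed.

Lemma sqnorm_le (v : vec) : sqnorm v <= m * (D - 1) ^ 2.
Proof.
rewrite -[m in m * _]card_ord -sum_nat_const; apply: leq_sum => i _.
by rewrite leq_exp2r //; have := ltn_ord (v i); lia.
Qed.

Lemma BO_Zp_lower :
  exists a, D ^ m <= a * (m * (D - 1) ^ 2).+1 /\ a < BO k 'Z_p.+2.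
Proof.
have [s big_level] := pigeonhole_fiber sqnorm_le.
exists #|level s|; split; first by move: big_level; rewrite card_ffun !card_ord.
rewrite -(card_imset _ embed_inj); apply: BO_gt; exact: level_free.
Qed.

End LevelSets.

From Stdlib Require Import Reals Lra.
(* Reals redefines "_ ^ _" in nat_scope; restore the ssrnat notations. *)
Import ssrnat.

Lemma max_base (n k m : nat) : (1 <= m)%N -> (1 <= k <= n)%N ->
  exists B, [/\ (1 <= B)%N, (k * B ^ m <= n)%N & (n < k * B.+1 ^ m)%N].
Proof.
move=> m1 /andP [k1 kn].
have exP : exists b, (k * b ^ m <= n)%N by exists 1; rewrite exp1n muln1.
have ubP b : (k * b ^ m <= n)%N -> (b <= n)%N.
  move=> hb; apply: leq_trans hb; case: b => // b.
  by rewrite -{1}(expn1 b.+1) (leq_trans (leq_pexp2l _ m1)) ?leq_pmull.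
case: (ex_maxnP exP ubP) => B hB hmax; exists B; split => //.
- by rewrite lt0n; apply/negP => /eqP B0; move: (hmax 1); rewrite exp1n muln1 kn B0 => /(_ isT).
- by rewrite ltnNge; apply: contraTN (ltnSn B) => /hmax; rewrite -ltnNge.
Qed.

Lemma ceil_quotient (B c : nat) : (0 < c)%N -> (0 < B)%N ->
  exists D, [/\ (0 < D)%N, (c * (D - 1) < B)%N & (B <= c * D)%N].
Proof.
move=> c0 B0; exists ((B - 1) %/ c).+1; split => //.
- by rewrite subn1 /=; have := leq_divM (B - 1) c; lia.
- by have := @ltn_ceil (B - 1) c c0; lia.
Qed.

(* Turning the pigeonhole bound D^m <= a (m (D-1)^2 + 1) into
   D^(m-2) <= m a, using m (D-1)^2 + 1 <= m D^2. *)
Lemma power_bound (m D a : nat) : (2 <= m)%N -> (0 < D)%N ->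
  (D ^ m <= a * (m * (D - 1) ^ 2).+1)%N -> (D ^ (m - 2) <= m * a)%N.
Proof.
move=> m2 D0 H.
have Em : D ^ m = D ^ (m - 2) * D ^ 2 by rewrite -expnD subnK.
set e := D ^ (m - 2) in Em *.
have L : (e * (m * (D - 1) ^ 2).+1 <= m * a * (m * (D - 1) ^ 2).+1)%N.
  apply: (@leq_trans (m * D ^ m)); last by rewrite -mulnA leq_mul2l H orbT.
  rewrite Em mulnA [m * e]mulnC -mulnA leq_mul2l; apply/orP; right.
  have : (1 <= m * (2 * D - 1))%N by nia.
  nia.
by rewrite leq_pmul2r in L.
Qed.

Lemma INR_expn a b : INR (a ^ b)%N = (INR a ^ b)%R.
Proof. by rewrite -pow_INR; congr INR; elim: b => //= b IH; rewrite expnS IH mulnE. Qed.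

Lemma INR_muln a b : INR (a * b)%N = (INR a * INR b)%R.
Proof. by rewrite mulnE mult_INR. Qed.

(* By maximality of B, the m-th root x of n / k satisfies 1 <= x < B + 1. *)
Lemma root_bounds (n k m B : nat) : (0 < INR k <= INR n)%R -> (0 < m)%N ->
  (INR n < INR k * (INR B + 1) ^ m)%R ->
  (1 <= Rpower (INR n / INR k) (/ INR m) < INR B + 1)%R.
Proof.
move=> [k0 kn] m0 nB.
have m0R : (0 < INR m)%R by apply: lt_0_INR; apply/ltP.
have nk1 : (1 <= INR n / INR k)%R.
  by apply: (Rmult_le_reg_r (INR k)) => //; rewrite /Rdiv Rmult_assoc Rinv_l; lra.
set x := Rpower _ _.
have x1 : (1 <= x)%R.
  rewrite /x -(Rpower_O (INR n / INR k)); last lra.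
  by apply: Rle_Rpower nk1 _; left; apply: Rinv_0_lt_compat.
have xm : (x ^ m = INR n / INR k)%R.
  rewrite -Rpower_pow; last lra.
  by rewrite /x Rpower_mult Rinv_l ?Rpower_1; lra.
split => //.
apply: Rnot_le_lt => Bx.
have : ((INR B + 1) ^ m <= x ^ m)%R.
  by apply: pow_incr; split => //; have := pos_INR B; lra.
rewrite xm => le_pow.
have : (INR k * (INR B + 1) ^ m <= INR k * (INR n / INR k))%R.
  by apply: Rmult_le_compat_l; lra.
have -> : (INR k * (INR n / INR k) = INR n)%R by field; lra.
lra.
Qed.

Lemma barycentric_ratio_bound (x k : R) (B D : nat) : (1 < k)%R ->
  (1 <= x < INR B + 1)%R -> (INR B <= (k - 1) * INR D)%R -> (1 <= INR D)%R ->
  (Rabs ((x - k) / (k - 1)) <= INR D)%R.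
Proof.
move=> k1 [x1 xB] BD D1.
have c0 : (0 < k - 1)%R by lra.
apply: Rabs_le; split; apply: (Rmult_le_reg_r (k - 1)) => //;
  rewrite /Rdiv Rmult_assoc Rinv_l ?Rmult_1_r; nra.
Qed.

Lemma scaled_pow_bound (y : R) (m D a : nat) : (0 < m)%N -> (Rabs y <= INR D)%R ->
  (INR D ^ (m - 2) <= INR m * INR a)%R -> (/ INR m * y ^ (m - 2) <= INR a)%R.
Proof.
move=> m0 yD Da.
have m0R : (0 < INR m)%R by apply: lt_0_INR; apply/ltP.
have ypow := pow_maj_Rabs (INR D) y (m - 2) yD.
apply: (Rmult_le_reg_l (INR m)) => //; rewrite -Rmult_assoc Rinv_r; lra.
Qed.

Theorem mainTheorem10 (n k m : nat) :
  (6 <= n)%N -> (3 <= k)%N -> (k <= n - 3)%N -> (2 <= m)%N ->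
  (/ INR m * ((Rpower (INR n / INR k) (/ INR m) - INR k) / (INR k - 1)) ^ (m - 2)
     <= INR (BO k ('Z_n : finZmodType)))%R.
Proof.
case: n => [|[|p]] // n6 k3 kn m2.
have [B [B1 kBm nB]] := @max_base p.+2 k m ltac:(lia) ltac:(lia).
have [D [D0 carry BD]] := @ceil_quotient B (k - 1) ltac:(lia) B1.
have [a [a_large a_lt]] := @BO_Zp_lower p k m B D ltac:(lia) carry kBm.
have natR (x y : nat) : (x <= y)%N -> (INR x <= INR y)%R by move/leP; apply: le_INR.
have k_sub1 : (INR k - 1 = INR (k - 1))%R by rewrite subnE minus_INR //; apply/leP; lia.
apply: (Rle_trans _ (INR a)); last by apply/natR/ltnW.
apply: (@scaled_pow_bound _ m D a); first lia; last first.
  by rewrite -INR_expn -INR_muln; apply/natR/power_bound.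
apply: (@barycentric_ratio_bound _ _ B D).
- by have := natR 2 k ltac:(lia); rewrite /=; lra.
- apply: root_bounds; first (split; [apply/lt_0_INR/ltP | apply: natR]); try lia.
  by rewrite -S_INR -INR_expn -INR_muln; apply: lt_INR; apply/ltP.
- by rewrite k_sub1 -INR_muln; apply: natR.
- exact: (natR 1 D).
Qed.
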